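(* Let $\rho$ be a single-qubit state with spectral decomposition $\rho=\lambda_0|\psi_0\rangle\langle\psi_0|+\lambda_1|\psi_1\rangle\langle\psi_1|$, $\lambda_0\neq\lambda_1$, and let $U(\bm\varphi)$ be any smooth family of $2\times2$ unitaries depending on two real parameters $\bm\varphi=(\varphi_1,\varphi_2)$. Let $\rho_{\bm\varphi}=U(\bm\varphi)\rho U(\bm\varphi)^\dagger$ and $|\psi_0(\bm\varphi)\rangle=U(\bm\varphi)|\psi_0\rangle$. Then the Uhlmann matrices satisfy $$D_{ij}(\rho_{\bm\varphi})=\pm\big(2\,\mathrm{Tr}(\rho^2)-1\big)^{3/2}\,D_{ij}\big(|\psi_0(\bm\varphi)\rangle\langle\psi_0(\bm\varphi)|\big)=\pm 4\big(2\,\mathrm{Tr}(\rho^2)-1\big)^{3/2}\,\mathrm{Im}\,\langle\psi_0|\mathcal{H}_i\mathcal{H}_j|\psi_0\rangle,$$ with the sign $+$ if $\lambda_0>\lambda_1$ and $-$ if $\lambda_0<\lambda_1$.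
   Context: Effective Hamiltonians: $\mathcal{H}_j:=i\,(\partial_{\varphi_j}U^\dagger(\bm\varphi))U(\bm\varphi)$. For a family of states $\rho_{\bm\varphi}$, the symmetric logarithmic derivatives $L_{\varphi_j}$ are Hermitian operators with $\partial_{\varphi_j}\rho_{\bm\varphi}=\tfrac12(L_{\varphi_j}\rho_{\bm\varphi}+\rho_{\bm\varphi}L_{\varphi_j})$, and the Uhlmann matrix is $D_{ij}(\rho_{\bm\varphi})=\mathrm{Im}\,\mathrm{Tr}(\rho_{\bm\varphi}L_{\varphi_i}L_{\varphi_j})=\frac{1}{2i}\mathrm{Tr}(\rho_{\bm\varphi}[L_{\varphi_i},L_{\varphi_j}])$ (independent of the non-unique part of $L$ outside the support). *)

From HB Require Import structures.
From mathcomp Require Import all_boot all_order all_algebra.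
From mathcomp Require Import all_classical all_reals all_analysis.
From mathcomp Require Export complex.
Set Implicit Arguments. Unset Strict Implicit. Unset Printing Implicit Defensive.
Import Order.TTheory GRing.Theory Num.Theory numFieldNormedType.Exports.
Local Open Scope ring_scope.

Section QDefs.
Variable R : realType.
Local Notation C := (R[i]).

Definition adj (m n : nat) (A : 'M[C]_(m, n)) : 'M[C]_(n, m) :=
  (map_mx (@conjc R) A)^T.

Definition evec (k : 'I_2) : 'rV[R]_2 := delta_mx 0 k.

Definition rpd (k : 'I_2) (g : 'rV[R]_2 -> R) (x : 'rV[R]_2) : R :=
  'D_(evec k) g x.

Fixpoint iter_rpd (ks : seq 'I_2) (g : 'rV[R]_2 -> R) : 'rV[R]_2 -> R :=
  match ks with
  | [::] => g
  | k :: ks' => rpd k (iter_rpd ks' g)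
  end.

Definition smooth_fun (g : 'rV[R]_2 -> R) : Prop :=
  forall (ks : seq 'I_2) (x : 'rV[R]_2), differentiable (iter_rpd ks g) x.

Definition smooth_mx (F : 'rV[R]_2 -> 'M[C]_2) : Prop :=
  forall r c : 'I_2,
    smooth_fun (fun y => complex.Re (F y r c)) /\ smooth_fun (fun y => complex.Im (F y r c)).

Definition pd (k : 'I_2) (F : 'rV[R]_2 -> 'M[C]_2) (x : 'rV[R]_2) : 'M[C]_2 :=
  \matrix_(r, c) Complex (rpd k (fun y => complex.Re (F y r c)) x)
                         (rpd k (fun y => complex.Im (F y r c)) x).

Definition effH (U : 'rV[R]_2 -> 'M[C]_2) (k : 'I_2) (x : 'rV[R]_2) : 'M[C]_2 :=
  (Complex 0 1) *: (pd k (fun y => adj (U y)) x *m U x).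

Definition is_SLD (rho : 'rV[R]_2 -> 'M[C]_2) (k : 'I_2) (x : 'rV[R]_2)
  (L : 'M[C]_2) : Prop :=
  adj L = L /\ pd k rho x = (2^-1) *: (L *m rho x + rho x *m L).

Definition uhlmann (rho Li Lj : 'M[C]_2) : R := complex.Im (\tr (rho *m Li *m Lj)).

End QDefs.

From HB Require Import structures.
From mathcomp Require Import all_boot all_order all_algebra.
From mathcomp Require Import all_classical all_reals all_analysis.
From mathcomp Require Import complex.
From mathcomp Require Import ring lra.
Import Order.TTheory GRing.Theory Num.Theory.
Local Open Scope ring_scope.
Set Implicit Arguments. Unset Strict Implicit. Unset Printing Implicit Defensive.

(* Write rho = V D V^dagger with V = [psi0 psi1] and D = diag(l0, l1), and let W = U(phi) V.
   Then rho_phi = W D W^dagger and, since d_k U = U (i H_k), d_k rho_phi = W (i [K_k, D]) W^dagger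
   with K_k = V^dagger H_k V Hermitian.  In the basis W the SLD equation reads entrywise
   (d_a + d_b) L_ab = 2 i (d_b - d_a) (K_k)_ab.  As l0 + l1 = 1 this fixes the off-diagonal
   entries of every SLD, while its diagonal does not contribute to Im Tr(rho_phi L_i L_j), which
   comes out as 4 (l0 - l1)^3 Im((K_i)_01 (K_j)_10).  The pure state is the case (l0, l1) = (1, 0);
   the diagonal of a Hermitian K is real, so Im <psi0|H_i H_j|psi0> = Im((K_i)_01 (K_j)_10); and
   2 Tr rho^2 - 1 = (l0 - l1)^2 turns the signed power into (l0 - l1)^3. *)

Lemma conjc_i (R : realType) : conjc 'i%C = - 'i%C :> R[i].
Proof. by apply/eqP; rewrite eq_complex /= oppr0 !eqxx. Qed.

Section Adjoint.
Variable R : realType.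
Local Notation C := R[i].

Lemma adjE m n (A : 'M[C]_(m, n)) r c : adj A r c = conjc (A c r).
Proof. by rewrite !mxE. Qed.

Lemma adjM m n p (A : 'M[C]_(m, n)) (B : 'M[C]_(n, p)) : adj (A *m B) = adj B *m adj A.
Proof. by rewrite /adj map_mxM trmx_mul. Qed.

Lemma adjK m n (A : 'M[C]_(m, n)) : adj (adj A) = A.
Proof. by apply/matrixP => r c; rewrite !adjE conjcK. Qed.

Lemma adj_scale m n a (A : 'M[C]_(m, n)) : adj (a *: A) = conjc a *: adj A.
Proof. by apply/matrixP => r c; rewrite !mxE rmorphM. Qed.

Lemma adj_conj_hermitian m n (A : 'M[C]_m) (V : 'M[C]_(m, n)) :
  adj A = A -> adj (adj V *m A *m V) = adj V *m A *m V.
Proof. by move=> hA; rewrite !adjM adjK hA mulmxA. Qed.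

End Adjoint.

Section ComplexDerivative.
Variables (R : realType) (V : normedModType R).
Local Notation C := R[i].
Implicit Types (f g : V -> C) (x v : V).

Definition cderivable f x v :=
  derivable (fun y => complex.Re (f y)) x v /\ derivable (fun y => complex.Im (f y)) x v.

Definition cderive f x v : C :=
  Complex ('D_v (fun y => complex.Re (f y)) x) ('D_v (fun y => complex.Im (f y)) x).

Lemma cderivable_cst (z : C) x v : cderivable (fun=> z) x v.
Proof. by split; exact: derivable_cst. Qed.

Lemma cderive_cst (z : C) x v : cderive (fun=> z) x v = 0.
Proof. by rewrite /cderive !derive_cst. Qed.

Lemma cderivable_conj f x v : cderivable f x v -> cderivable (fun y => conjc (f y)) x v.
Proof.
case=> dRe dIm; split.
  by rewrite (_ : (fun y => _) = fun y => complex.Re (f y)) //; apply/funext => y; case: (f y).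
rewrite (_ : (fun y => _) = - (fun y => complex.Im (f y))); first exact: derivableN.
by apply/funext => y; rewrite -[RHS]/(- complex.Im (f y)); case: (f y).
Qed.

Lemma cderive_conj f x v : cderivable f x v ->
  cderive (fun y => conjc (f y)) x v = conjc (cderive f x v).
Proof.
case=> _ dIm; rewrite /cderive.
rewrite (_ : (fun y => complex.Re (conjc (f y))) = fun y => complex.Re (f y)).
  rewrite (_ : (fun y => complex.Im (conjc (f y))) = - (fun y => complex.Im (f y))).
    by rewrite deriveN.
  by apply/funext => y; rewrite -[RHS]/(- complex.Im (f y)); case: (f y).
by apply/funext => y; case: (f y).
Qed.

Section Arithmetic.
Variables (f g : V -> C) (x v : V).
Hypotheses (df : cderivable f x v) (dg : cderivable g x v).

Let ReD : (fun y => complex.Re (f y + g y)) =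
  (fun y => complex.Re (f y) + complex.Re (g y)).
Proof. by apply/funext => y; case: (f y); case: (g y). Qed.
Let ImD : (fun y => complex.Im (f y + g y)) =
  (fun y => complex.Im (f y) + complex.Im (g y)).
Proof. by apply/funext => y; case: (f y); case: (g y). Qed.
Let ReM : (fun y => complex.Re (f y * g y)) =
  (fun y => complex.Re (f y) * complex.Re (g y) - complex.Im (f y) * complex.Im (g y)).
Proof. by apply/funext => y; case: (f y); case: (g y). Qed.
Let ImM : (fun y => complex.Im (f y * g y)) =
  (fun y => complex.Re (f y) * complex.Im (g y) + complex.Im (f y) * complex.Re (g y)).
Proof. by apply/funext => y; case: (f y) => a b; case: (g y) => c d /=; rewrite addrC. Qed.

Lemma cderivableD : cderivable (fun y => f y + g y) x v.
Proof.
case: df dg => dfR dfI [dgR dgI]; rewrite /cderivable ReD ImD.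
by split; [exact: (derivableD dfR dgR) | exact: (derivableD dfI dgI)].
Qed.

Lemma cderiveD : cderive (fun y => f y + g y) x v = cderive f x v + cderive g x v.
Proof.
case: df dg => dfR dfI [dgR dgI].
by rewrite /cderive ReD ImD (deriveD dfR dgR) (deriveD dfI dgI).
Qed.

Lemma cderivableM : cderivable (fun y => f y * g y) x v.
Proof.
case: df dg => dfR dfI [dgR dgI]; rewrite /cderivable ReM ImM; split.
  exact: (derivableB (derivableM dfR dgR) (derivableM dfI dgI)).
exact: (derivableD (derivableM dfR dgI) (derivableM dfI dgR)).
Qed.

Lemma cderiveM :
  cderive (fun y => f y * g y) x v = cderive f x v * g x + f x * cderive g x v.
Proof.
case: df dg => dfR dfI [dgR dgI]; rewrite /cderive ReM ImM.
rewrite (deriveB (derivableM dfR dgR) (derivableM dfI dgI)).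
rewrite (deriveD (derivableM dfR dgI) (derivableM dfI dgR)).
rewrite (deriveM dfR dgR) (deriveM dfI dgI) (deriveM dfR dgI) (deriveM dfI dgR).
case: (f x) => a b; case: (g x) => c d /=.
have scaleE (p q : R) : p *: q = p * q by [].
by apply/eqP; rewrite eq_complex /= !scaleE; apply/andP; split; apply/eqP; ring.
Qed.

End Arithmetic.
End ComplexDerivative.

Section MatrixDerivative.
Variable R : realType.
Local Notation C := R[i].
Implicit Types (F G : 'rV[R]_2 -> 'M[C]_2) (k : 'I_2) (x : 'rV[R]_2).

Definition mx_derivable k F x :=
  forall r c, cderivable (fun y => F y r c) x (evec R k).

Lemma pdE k F x r c : pd k F x r c = cderive (fun y => F y r c) x (evec R k).
Proof. by rewrite mxE. Qed.

Lemma mulmx2E m p (A : 'M[C]_(m, 2)) (B : 'M[C]_(2, p)) r c :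
  (A *m B) r c = A r 0 * B 0 c + A r 1 * B 1 c.
Proof. by rewrite mxE big_ord_recl big_ord1 (_ : lift ord0 ord0 = 1) //; apply: val_inj. Qed.

Lemma smooth_mx_derivable k F x : smooth_mx F -> mx_derivable k F x.
Proof.
move=> sF r c; have [sRe sIm] := sF r c.
by split; apply: diff_derivable; [exact: (sRe [::]) | exact: (sIm [::])].
Qed.

Lemma mx_derivable_cst k (M : 'M[C]_2) x : mx_derivable k (fun=> M) x.
Proof. by move=> r c; exact: cderivable_cst. Qed.

Lemma pd_cst k (M : 'M[C]_2) x : pd k (fun=> M) x = 0.
Proof. by apply/matrixP => r c; rewrite pdE cderive_cst mxE. Qed.

Lemma mx_derivable_adj k F x : mx_derivable k F x -> mx_derivable k (fun y => adj (F y)) x.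
Proof.
move=> dF r c; rewrite (_ : (fun y => _) = fun y => conjc (F y c r)).
  exact: cderivable_conj.
by apply/funext => y; rewrite adjE.
Qed.

Lemma pd_adj k F x : mx_derivable k F x -> pd k (fun y => adj (F y)) x = adj (pd k F x).
Proof.
move=> dF; apply/matrixP => r c; rewrite adjE !pdE -cderive_conj //.
by congr cderive; apply/funext => y; rewrite adjE.
Qed.

Section Product.
Variables (k : 'I_2) (F G : 'rV[R]_2 -> 'M[C]_2) (x : 'rV[R]_2).
Hypotheses (dF : mx_derivable k F x) (dG : mx_derivable k G x).

Let mulmx_entry r c : (fun y => (F y *m G y) r c) =
  (fun y => F y r 0 * G y 0 c + F y r 1 * G y 1 c).
Proof. by apply/funext => y; rewrite mulmx2E. Qed.

Lemma mx_derivable_mul : mx_derivable k (fun y => F y *m G y) x.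
Proof.
move=> r c; rewrite mulmx_entry.
by apply: cderivableD; apply: cderivableM.
Qed.

Lemma pd_mul : pd k (fun y => F y *m G y) x = pd k F x *m G x + F x *m pd k G x.
Proof.
apply/matrixP => r c; rewrite pdE mulmx_entry cderiveD; try exact: cderivableM.
rewrite !cderiveM // [RHS]mxE !mulmx2E !pdE; ring.
Qed.

End Product.
End MatrixDerivative.

Section EffectiveHamiltonian.
Variables (R : realType) (U : 'rV[R]_2 -> 'M[R[i]]_2) (k : 'I_2) (x : 'rV[R]_2).
Hypotheses (hU : forall y, adj (U y) *m U y = 1%:M) (sU : smooth_mx U).

Let dU : mx_derivable k U x := smooth_mx_derivable k x sU.

Lemma adj_pd_unitary : adj (pd k U x) *m U x = - (adj (U x) *m pd k U x).
Proof.
have := pd_mul (mx_derivable_adj dU) dU.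
rewrite pd_adj // (_ : (fun y => _) = fun=> 1%:M) ?pd_cst; last by apply/funext => y.
by move/eqP; rewrite eq_sym addr_eq0 => /eqP.
Qed.

Lemma effH_adj : adj (effH U k x) = effH U k x.
Proof.
rewrite /effH pd_adj // adj_scale adjM adjK adj_pd_unitary conjc_i.
by rewrite scaleNr scalerN.
Qed.

Lemma pd_unitaryE : pd k U x = U x *m ('i%C *: effH U k x).
Proof.
rewrite /effH pd_adj // adj_pd_unitary scalerA -expr2 sqr_i scaleN1r opprK.
by rewrite mulmxA (mulmx1C (hU x)) mul1mx.
Qed.

Lemma pd_unitary_conj (M : 'M[R[i]]_2) :
  pd k (fun y => U y *m M *m adj (U y)) x =
  U x *m ('i%C *: (effH U k x *m M - M *m effH U k x)) *m adj (U x).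
Proof.
have dM := mx_derivable_cst k M x.
rewrite (pd_mul (mx_derivable_mul dU dM) (mx_derivable_adj dU)) (pd_mul dU dM).
rewrite pd_cst mulmx0 addr0 pd_adj // pd_unitaryE adjM adj_scale effH_adj conjc_i.
rewrite scalerBr mulmxBr mulmxBl scaleNr mulNmx mulmxN.
by rewrite -!scalemxAl -!scalemxAr -!scalemxAl !mulmxA.
Qed.

End EffectiveHamiltonian.

Definition sld_eqn (R : realType) n (dA A L : 'M[R[i]]_n) : Prop :=
  dA = 2^-1 *: (L *m A + A *m L).

Lemma unitary_mulmx (R : realType) n (A B : 'M[R[i]]_n) :
  adj A *m A = 1%:M -> adj B *m B = 1%:M -> adj (A *m B) *m (A *m B) = 1%:M.
Proof. by move=> hA hB; rewrite adjM -mulmxA (mulmxA (adj A)) hA mul1mx. Qed.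

Section UnitaryConjugation.
Variables (R : realType) (n : nat) (W : 'M[R[i]]_n).
Hypothesis hW : adj W *m W = 1%:M.
Implicit Types X Y : 'M[R[i]]_n.

Lemma mulmx_conj_unitary X Y :
  (W *m X *m adj W) *m (W *m Y *m adj W) = W *m (X *m Y) *m adj W.
Proof. by rewrite !mulmxA -(mulmxA _ (adj W)) hW mulmx1. Qed.

Lemma mulmx_conj_unitaryV X Y :
  (adj W *m X *m W) *m (adj W *m Y *m W) = adj W *m (X *m Y) *m W.
Proof. by rewrite !mulmxA -(mulmxA _ W) (mulmx1C hW) mulmx1. Qed.

Lemma conj_unitaryK X : W *m (adj W *m X *m W) *m adj W = X.
Proof. by rewrite !mulmxA (mulmx1C hW) mul1mx -mulmxA (mulmx1C hW) mulmx1. Qed.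

Lemma conj_unitaryKV X : adj W *m (W *m X *m adj W) *m W = X.
Proof. by rewrite !mulmxA hW mul1mx -mulmxA hW mulmx1. Qed.

Lemma conj_unitary_inj X Y : W *m X *m adj W = W *m Y *m adj W -> X = Y.
Proof. by move=> /(congr1 (fun Z => adj W *m Z *m W)); rewrite !conj_unitaryKV. Qed.

Lemma mxtrace_conj_unitary X : \tr (W *m X *m adj W) = \tr X.
Proof. by rewrite mxtrace_mulC mulmxA hW mul1mx. Qed.

Lemma commutator_conj_unitary H X :
  H *m (W *m X *m adj W) - (W *m X *m adj W) *m H =
  W *m ((adj W *m H *m W) *m X - X *m (adj W *m H *m W)) *m adj W.
Proof.
rewrite -{1 2}[H](conj_unitaryK H) !mulmx_conj_unitary.
by rewrite mulmxBr mulmxBl.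
Qed.

Lemma sld_eqn_conj_unitary dA A L :
  sld_eqn (W *m dA *m adj W) (W *m A *m adj W) L <-> sld_eqn dA A (adj W *m L *m W).
Proof.
rewrite /sld_eqn -{1 2}[L](conj_unitaryK L) !mulmx_conj_unitary.
rewrite -mulmxDl -mulmxDr scalemxAl scalemxAr.
by split=> [/conj_unitary_inj | ->].
Qed.

End UnitaryConjugation.

Lemma sld_eqn_diag_entry (R : realType) n (d : 'rV[R[i]]_n) (K L : 'M[R[i]]_n) a b :
  sld_eqn ('i%C *: (K *m diag_mx d - diag_mx d *m K)) (diag_mx d) L ->
  (d 0 a + d 0 b) * L a b = 2 * 'i%C * (d 0 b - d 0 a) * K a b.
Proof.
rewrite /sld_eqn !mul_mx_diag !mul_diag_mx => /(congr1 (fun M : 'M[R[i]]_n => M a b)).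
rewrite !mxE => E.
have two_halfK (z : R[i]) : 2 * (2^-1 * z) = z by rewrite mulrA divff ?mul1r ?pnatr_eq0.
transitivity (2 * (2^-1 * (L a b * d 0 b + d 0 a * L a b))).
  by rewrite two_halfK; ring.
by rewrite -E; ring.
Qed.

Section Qubit.
Variable R : realType.
Local Notation C := R[i].

Lemma ord2 (a : 'I_2) : a = 0 \/ a = 1.
Proof. by case: a => [[|[|//]] h]; [left | right]; apply: val_inj. Qed.

Definition eigval_row (l0 l1 : R) : 'rV[C]_2 :=
  \row_k Complex (if k == 0 then l0 else l1) 0.

Lemma eigval_rowD (l0 l1 : R) (a b : 'I_2) : a != b ->
  eigval_row l0 l1 0 a + eigval_row l0 l1 0 b = Complex (l0 + l1) 0.
Proof.
rewrite !mxE; case: (ord2 a) => ->; case: (ord2 b) => -> //= _.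
all: by apply/eqP; rewrite eq_complex /= addr0 ?eqxx // addrC eqxx.
Qed.

Local Notation D l0 l1 := (diag_mx (eigval_row l0 l1)).

Definition qubit_sld (l0 l1 : R) (K : 'M[C]_2) : 'M[C]_2 :=
  \matrix_(a, b) (2 * 'i%C * (eigval_row l0 l1 0 b - eigval_row l0 l1 0 a) * K a b).

Lemma qubit_sld_adj (l0 l1 : R) (K : 'M[C]_2) :
  adj K = K -> adj (qubit_sld l0 l1 K) = qubit_sld l0 l1 K.
Proof.
move=> hK; apply/matrixP => a b; rewrite adjE !mxE -[K a b]conjcK -adjE hK.
move: (if a == 0 then l0 else l1) (if b == 0 then l0 else l1) (K b a) => p q [z1 z2].
by apply/eqP; rewrite eq_complex /=; apply/andP; split; apply/eqP; ring.
Qed.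

Lemma sld_eqn_qubit_sld (l0 l1 : R) (K : 'M[C]_2) : l0 + l1 = 1 ->
  sld_eqn ('i%C *: (K *m D l0 l1 - D l0 l1 *m K)) (D l0 l1) (qubit_sld l0 l1 K).
Proof.
move=> hs; apply/matrixP => a b; rewrite /qubit_sld.
have := @eigval_rowD l0 l1 a b; rewrite hs; move: (eigval_row l0 l1) => d dab.
rewrite !mul_mx_diag !mul_diag_mx !mxE.
have [<- | /dab dabE] := eqVneq a b; first by rewrite subrr; ring.
have -> : d 0 b = 1 - d 0 a by rewrite -[1]dabE addrC addKr.
by field.
Qed.

Lemma mxtrace2 (A : 'M[C]_2) : \tr A = A 0 0 + A 1 1.
Proof.
by rewrite /mxtrace big_ord_recl big_ord1 (_ : lift ord0 ord0 = 1) //; apply: val_inj.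
Qed.

Lemma sld_eqn_qubit_entries (l0 l1 : R) (K L : 'M[C]_2) : l0 + l1 = 1 ->
  sld_eqn ('i%C *: (K *m D l0 l1 - D l0 l1 *m K)) (D l0 l1) L ->
  let d := eigval_row l0 l1 in
  [/\ d 0 0 * L 0 0 = 0, d 0 1 * L 1 1 = 0,
      L 0 1 = 2 * 'i%C * (d 0 1 - d 0 0) * K 0 1 &
      L 1 0 = 2 * 'i%C * (d 0 0 - d 0 1) * K 1 0].
Proof.
move=> hs /sld_eqn_diag_entry e d.
have diag a : d 0 a * L a a = 0.
  apply/eqP; have := e a a; rewrite subrr mulr0 mul0r -mulr2n mulrnAl => /eqP.
  by rewrite mulrn_eq0.
have offdiag a b : a != b -> L a b = 2 * 'i%C * (d 0 b - d 0 a) * K a b.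
  by move=> ab; rewrite -e eigval_rowD // hs (_ : Complex 1 0 = 1) // mul1r.
by split; [exact: diag | exact: diag | exact: offdiag | exact: offdiag].
Qed.

Lemma uhlmann_qubit_eigbasis (l0 l1 : R) (K1 K2 L1 L2 : 'M[C]_2) :
  l0 + l1 = 1 -> adj K1 = K1 -> adj K2 = K2 ->
  sld_eqn ('i%C *: (K1 *m D l0 l1 - D l0 l1 *m K1)) (D l0 l1) L1 ->
  sld_eqn ('i%C *: (K2 *m D l0 l1 - D l0 l1 *m K2)) (D l0 l1) L2 ->
  complex.Im (\tr (D l0 l1 *m L1 *m L2)) =
    4 * (l0 - l1) ^+ 3 * complex.Im (K1 0 1 * K2 1 0).
Proof.
move=> hs hK1 hK2 /(sld_eqn_qubit_entries hs) [a00 a11 a01 a10].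
move=> /(sld_eqn_qubit_entries hs) [_ b11 b01 b10].
rewrite mxtrace2 mul_diag_mx !mulmx2E !mxE /=.
rewrite !mxE /= in a00 a11 a01 a10 b11 b01 b10.
have k10 : K1 1 0 = conjc (K1 0 1) by rewrite -adjE hK1.
have k01 : K2 0 1 = conjc (K2 1 0) by rewrite -adjE hK2.
have two : 2 = Complex 2 0 :> C by apply/eqP; rewrite eq_complex /= addr0 !eqxx.
rewrite a00 a11 a01 a10 b01 b10 k10 k01 two !mul0r add0r addr0.
move: (K1 0 1) (K2 1 0) => [p q] [r t]; simpc => /=.
ring.
Qed.

End Qubit.

Section Eigenbasis.
Variable R : realType.
Local Notation C := R[i].
Variables p0 p1 : 'cV[C]_2.

Definition mx_of_cols2 : 'M[C]_2 := \matrix_(r, c) (if c == 0 then p0 r 0 else p1 r 0).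

Lemma mx_of_cols2_unitary :
  adj p0 *m p0 = 1%:M -> adj p1 *m p1 = 1%:M -> adj p0 *m p1 = 0 ->
  adj mx_of_cols2 *m mx_of_cols2 = 1%:M.
Proof.
move=> h0 h1 h01.
have h10 : adj p1 *m p0 = 0.
  by rewrite -[p0]adjK -adjM h01; apply/matrixP => r c; rewrite !mxE conjc0.
move: h0 h1 h01 h10 => /matrixP/(_ 0 0) e0 /matrixP/(_ 0 0) e1.
move=> /matrixP/(_ 0 0) e01 /matrixP/(_ 0 0) e10.
rewrite !mulmx2E !mxE in e0 e1 e01 e10.
apply/matrixP => a b; rewrite mulmx2E !adjE !mxE.
by case: (ord2 a) => ->; case: (ord2 b) => -> /=.
Qed.

Lemma mx_of_cols2_spectral (l0 l1 : R) :
  Complex l0 0 *: (p0 *m adj p0) + Complex l1 0 *: (p1 *m adj p1) =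
  mx_of_cols2 *m diag_mx (eigval_row l0 l1) *m adj mx_of_cols2.
Proof.
apply/matrixP => a b; rewrite mul_mx_diag mulmx2E !mxE !big_ord1 !mxE /=.
ring.
Qed.

Lemma mx_of_cols2_form00 (X : 'M[C]_2) :
  (adj p0 *m X *m p0) 0 0 = (adj mx_of_cols2 *m X *m mx_of_cols2) 0 0.
Proof. by rewrite !mulmx2E !mxE. Qed.

End Eigenbasis.

Lemma powR32_sqr (R : realType) (a : R) : powR (a ^+ 2) (3%:R / 2%:R) = `|a| ^+ 3.
Proof.
rewrite -(real_normK (num_real a)) -powR_mulrn ?normr_ge0 // -powRrM.
by rewrite (_ : 2%:R * (3%:R / 2%:R) = 3%:R) ?powR_mulrn ?normr_ge0 //; field.
Qed.

Lemma signed_purity_cube (R : realType) (l0 l1 : R) : l0 + l1 = 1 -> l0 != l1 ->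
  (if l1 < l0 then 1 else -1) * powR (2 * (l0 ^+ 2 + l1 ^+ 2) - 1) (3%:R / 2%:R) =
  (l0 - l1) ^+ 3.
Proof.
move=> hs hne.
have -> : 2 * (l0 ^+ 2 + l1 ^+ 2) - 1 = (l0 - l1) ^+ 2.
  have -> : l1 = 1 - l0 by lra.
  by ring.
rewrite powR32_sqr; case: ifP => [lt10 | /negbT].
  by rewrite mul1r gtr0_norm // subr_gt0.
rewrite -leNgt le_eqVlt (negbTE hne) /= => lt01.
by rewrite ltr0_norm ?subr_lt0 //; ring.
Qed.

Lemma Re_mxtrace_sqr_spectral (R : realType) (V : 'M[R[i]]_2) (l0 l1 : R) :
  adj V *m V = 1%:M ->
  let rho := V *m diag_mx (eigval_row l0 l1) *m adj V in
  complex.Re (\tr (rho *m rho)) = l0 ^+ 2 + l1 ^+ 2.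
Proof.
move=> hV rho; rewrite /rho mulmx_conj_unitary // mxtrace_conj_unitary //.
by rewrite mxtrace2 !mulmx2E !mxE /=; ring.
Qed.

Lemma Im_mulmx_hermitian00 (R : realType) (K1 K2 : 'M[R[i]]_2) :
  adj K1 = K1 -> adj K2 = K2 ->
  complex.Im ((K1 *m K2) 0 0) = complex.Im (K1 0 1 * K2 1 0).
Proof.
move=> hK1 hK2.
have real00 (K : 'M[R[i]]_2) : adj K = K -> complex.Im (K 0 0) = 0.
  move=> /matrixP/(_ 0 0); rewrite adjE; case: (K 0 0) => a b [] /=; lra.
rewrite mulmx2E.
move: (real00 _ hK1) (real00 _ hK2); case: (K1 0 0) => a b; case: (K2 0 0) => c d /= -> ->.
by case: (K1 0 1 * K2 1 0) => p q /=; ring.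
Qed.

Section SpectralFamily.
Variables (R : realType) (U : 'rV[R]_2 -> 'M[R[i]]_2) (V : 'M[R[i]]_2) (l0 l1 : R).
Variable x : 'rV[R]_2.
Hypotheses (hU : forall y, adj (U y) *m U y = 1%:M) (sU : smooth_mx U).
Hypotheses (hV : adj V *m V = 1%:M) (hs : l0 + l1 = 1).

Local Notation D := (diag_mx (eigval_row l0 l1)).
Local Notation W := (U x *m V).
Local Notation K k := (adj V *m effH U k x *m V).
Local Notation rho_phi := (fun y => U y *m (V *m D *m adj V) *m adj (U y)).

Let hW : adj W *m W = 1%:M. Proof. exact: unitary_mulmx. Qed.

Let rho_phiE : rho_phi x = W *m D *m adj W.
Proof. by rewrite adjM !mulmxA. Qed.

Let K_adj k : adj (K k) = K k.
Proof. exact/adj_conj_hermitian/effH_adj. Qed.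

Lemma pd_spectral_family k : pd k rho_phi x = W *m ('i%C *: (K k *m D - D *m K k)) *m adj W.
Proof.
rewrite pd_unitary_conj // commutator_conj_unitary // scalemxAl scalemxAr.
by rewrite adjM !mulmxA.
Qed.

Lemma is_SLD_spectral_family k : is_SLD rho_phi k x (W *m qubit_sld l0 l1 (K k) *m adj W).
Proof.
split; first by rewrite adjM adjK adjM qubit_sld_adj // mulmxA.
rewrite pd_spectral_family rho_phiE; apply/sld_eqn_conj_unitary => //.
by rewrite conj_unitaryKV //; exact: sld_eqn_qubit_sld.
Qed.

Lemma uhlmann_spectral_family i j Li Lj :
  is_SLD rho_phi i x Li -> is_SLD rho_phi j x Lj ->
  uhlmann (rho_phi x) Li Lj = 4 * (l0 - l1) ^+ 3 * complex.Im (K i 0 1 * K j 1 0).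
Proof.
have eigbasis k L : is_SLD rho_phi k x L ->
    sld_eqn ('i%C *: (K k *m D - D *m K k)) D (adj W *m L *m W).
  by move=> [_ hL]; apply/(sld_eqn_conj_unitary hW); rewrite -pd_spectral_family -rho_phiE.
move=> /eigbasis hLi /eigbasis hLj.
rewrite /uhlmann rho_phiE -[Li](conj_unitaryK hW) -[Lj](conj_unitaryK hW).
rewrite !mulmx_conj_unitary // mxtrace_conj_unitary //.
exact: uhlmann_qubit_eigbasis hs (K_adj i) (K_adj j) hLi hLj.
Qed.

End SpectralFamily.

Theorem mainTheorem5 (R : realType) (l0 l1 : R) (psi0 psi1 : 'cV[R[i]]_2)
  (rho : 'M[R[i]]_2) (U : 'rV[R]_2 -> 'M[R[i]]_2) :
  0 <= l0 -> 0 <= l1 -> l0 + l1 = 1 -> l0 != l1 ->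
  adj psi0 *m psi0 = 1%:M -> adj psi1 *m psi1 = 1%:M -> adj psi0 *m psi1 = 0 ->
  rho = (Complex l0 0) *: (psi0 *m adj psi0) + (Complex l1 0) *: (psi1 *m adj psi1) ->
  (forall x, adj (U x) *m U x = 1%:M) ->
  smooth_mx U ->
  let rho_phi := fun x => U x *m rho *m adj (U x) in
  let P := fun x => (U x *m psi0) *m adj (U x *m psi0) in
  let s : R := if l1 < l0 then 1 else -1 in
  let c : R := powR (2 * complex.Re (\tr (rho *m rho)) - 1) (3%:R / 2%:R) in
  forall x : 'rV[R]_2,
    (forall k, exists L, is_SLD rho_phi k x L) /\
    (forall k, exists L, is_SLD P k x L) /\
    (forall (i j : 'I_2) (Li Lj Mi Mj : 'M[R[i]]_2),
       is_SLD rho_phi i x Li -> is_SLD rho_phi j x Lj ->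
       is_SLD P i x Mi -> is_SLD P j x Mj ->
       uhlmann (rho_phi x) Li Lj = s * c * uhlmann (P x) Mi Mj /\
       uhlmann (rho_phi x) Li Lj =
         s * 4 * c * complex.Im ((adj psi0 *m effH U i x *m effH U j x *m psi0) 0 0)).
Proof.
move=> _ _ hs hne h0 h1 h01 hrho hU sU rho_phi P s c x.
pose V := mx_of_cols2 psi0 psi1.
have hV : adj V *m V = 1%:M := mx_of_cols2_unitary h0 h1 h01.
have hs10 : 1 + 0 = 1 :> R by rewrite addr0.
have rhoE : rho = V *m diag_mx (eigval_row l0 l1) *m adj V.
  by rewrite hrho mx_of_cols2_spectral.
have PE : P = fun y => U y *m (V *m diag_mx (eigval_row 1 0) *m adj V) *m adj (U y).
  apply/funext => y; rewrite /P -mx_of_cols2_spectral scale0r addr0.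
  by rewrite (_ : Complex 1 0 = 1) // scale1r adjM !mulmxA.
have sc : s * c = (l0 - l1) ^+ 3.
  by rewrite /c rhoE Re_mxtrace_sqr_spectral // signed_purity_cube.
have K_adj k : adj (adj V *m effH U k x *m V) = adj V *m effH U k x *m V.
  exact/adj_conj_hermitian/effH_adj.
have psiE i j : complex.Im ((adj psi0 *m effH U i x *m effH U j x *m psi0) 0 0) =
    complex.Im ((adj V *m effH U i x *m V) 0 1 * (adj V *m effH U j x *m V) 1 0).
  rewrite -(mulmxA (adj psi0)) (mx_of_cols2_form00 psi0 psi1) -/V.
  by rewrite -(mulmx_conj_unitaryV hV) Im_mulmx_hermitian00.
rewrite /rho_phi rhoE PE.
split; [|split] => [k | k | i j Li Lj Mi Mj hLi hLj hMi hMj].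
- by eexists; exact: is_SLD_spectral_family hU sU hV hs k.
- by eexists; exact: is_SLD_spectral_family hU sU hV hs10 k.
rewrite (uhlmann_spectral_family hU sU hV hs hLi hLj).
rewrite (uhlmann_spectral_family hU sU hV hs10 hMi hMj).
by rewrite psiE (mulrAC s 4 c) sc subr0 expr1n; split; ring.
Qed.
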